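(* For every integer $m\geq 1$, the graph $\mathcal{G}^1_{6m+1}$ is transmission irregular.
   Context: Let $G_1$ be the graph with vertices $a,b,c,d,e$ and edges $ab,ac,ad,bc,cd,de$. For an integer $n\ge 2$, $\mathcal{G}^1_n$ is obtained from $G_1$ by adding a new path from $a$ to $b$ with $n$ new internal vertices (i.e. a path $a,x_1,\dots,x_n,b$ of length $n+1$, where the $x_i$ are new vertices). The transmission of a vertex $u$ in a connected graph $G$ is $Tr_G(u)=\sum_{v}d_G(u,v)$; a graph is transmission irregular if no two of its vertices have equal transmission. *)

From mathcomp Require Import all_boot.
Set Implicit Arguments. Unset Strict Implicit. Unset Printing Implicit Defensive.

(* A simple graph is given by a symmetric irreflexive relation e on a finType. *)

Fixpoint walk (T : finType) (e : rel T) (k : nat) (u v : T) : bool :=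
  if k is k'.+1 then [exists w, e u w && walk e k' w v] else u == v.

(* Graph distance: the least k such that a walk of length k from u to v exists
   (a shortest walk is a shortest path).  In a connected graph such a k is < #|T|;
   for unreachable pairs the value #|T| is returned (irrelevant here). *)
Definition dist (T : finType) (e : rel T) (u v : T) : nat :=
  find (fun k => walk e k u v) (iota 0 #|T|).

Definition transmission (T : finType) (e : rel T) (u : T) : nat :=
  \sum_(v : T) dist e u v.

Definition transmission_irregular (T : finType) (e : rel T) : Prop :=
  forall u v : T, transmission e u = transmission e v -> u = v.

(* The graph G^1_n on vertex set 'I_(n+5):
   0 = a, 1 = b, 2 = c, 3 = d, 4 = e, and 4+i = x_i for 1 <= i <= n.
   Edges: ab, ac, ad, bc, cd, de, and the path a, x_1, ..., x_n, b. *)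
Definition G1_edge (n i j : nat) : bool :=
  [|| (i == 0) && (j == 1), (i == 0) && (j == 2), (i == 0) && (j == 3),
      (i == 1) && (j == 2), (i == 2) && (j == 3), (i == 3) && (j == 4),
      (i == 0) && (j == 5),
      [&& 5 <= i, i < n + 4 & j == i.+1]
    | (i == n + 4) && (j == 1)].

Definition G1 (n : nat) : rel 'I_(n + 5) :=
  fun i j => G1_edge n i j || G1_edge n j i.

From mathcomp Require Import all_boot zify.

Set Implicit Arguments.
Unset Strict Implicit.
Unset Printing Implicit Defensive.

(* The distances of G^1_n are given by an explicit formula: between vertices
   of the cycle a, x_1, ..., x_n, b (of length n + 2) they are cycle distances,
   c is one step beyond the nearer end of the edge ab, and d, e are one and two
   steps beyond a.  A formula that vanishes only on the diagonal, grows by at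
   most one along an edge, and decreases along some edge wherever it is positive
   is the graph distance.  Summing it, with S the transmission of the cycle and
   S' the sum of the distances to the edge ab, a cycle vertex at distance j
   from a has transmission S + (distance to ab) + 2 j + 4, while
   Tr(c) = S' + n + 5, Tr(d) = S + n + 4 and Tr(e) = S + 2n + 7.
   For n = 6m + 1 the cycle has odd length 2k + 1 with k = 3m + 1, so
   S = S' + k, and every transmission is S + 4 + t with t = 3j (0 <= j <= k)
   or 3j - 1 (1 <= j <= k) on the cycle, t = 3m + 1 at c, 6m + 1 at d and
   12m + 5 at e: these are pairwise distinct by their residues mod 3 and by
   size. *)

Section DistanceCertificate.

Variables (T : finType) (e : rel T) (D : T -> T -> nat).
Hypotheses (D_refl : forall u, D u u = 0)
           (D_eq0 : forall u v, D u v = 0 -> u = v)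
           (D_edge : forall u w v, e u w -> D u v <= (D w v).+1)
           (D_step : forall u v, 0 < D u v -> exists2 w, e u w & (D w v).+1 = D u v)
           (D_lt_card : forall u v, D u v < #|T|).

Lemma D_le_walk k u v : walk e k u v -> D u v <= k.
Proof.
elim: k u => [|k IHk] u /=; first by move/eqP->; rewrite D_refl.
by case/existsP=> w /andP[euw /IHk]; have := D_edge v euw; lia.
Qed.

Lemma walk_D u v : walk e (D u v) u v.
Proof.
move Duv: (D u v) => d; elim: d u Duv => [|d IHd] u Duv /=.
  by rewrite (D_eq0 Duv).
have [w euw Dw] : exists2 w, e u w & (D w v).+1 = D u v by apply: D_step; rewrite Duv.
by apply/existsP; exists w; rewrite euw IHd //; lia.
Qed.

Lemma dist_eq_certificate u v : dist e u v = D u v.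
Proof.
rewrite /dist -(subnKC (ltnW (D_lt_card u v))) iotaD find_cat size_iota.
have -> : has (fun k => walk e k u v) (iota 0 (D u v)) = false.
  by apply/hasP=> -[k]; rewrite mem_iota => /andP[_ ltk] /D_le_walk; lia.
by case: (_ - _) (D_lt_card u v) => [|r] /=; [lia | rewrite walk_D addn0].
Qed.

End DistanceCertificate.

(* Position on the cycle a, x_1, ..., x_n, b: a = 0, x_i = i, b = n + 1.
   The value 0 at c, d, e is a junk value. *)
Definition cycle_pos (n i : nat) : nat :=
  match i with 0 => 0 | 1 => n.+1 | p.+4 => p | _ => 0 end.

Definition cycle_vertex (n p : nat) : nat :=
  if p == 0 then 0 else if p == n.+1 then 1 else p.+4.

Definition cycle_dist (n p q : nat) : nat :=
  minn (p - q + (q - p)) (n.+2 - (p - q + (q - p))).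

Definition ab_dist (n p : nat) : nat := minn p (n.+1 - p).

Definition dist_to_cycle (n u p : nat) : nat :=
  match u with
  | 2 => (ab_dist n p).+1
  | 3 => (cycle_dist n p 0).+1
  | 4 => (cycle_dist n p 0).+2
  | _ => cycle_dist n (cycle_pos n u) p
  end.

Definition G1_dist (n u v : nat) : nat :=
  match u, v with
  | 2, 2 | 3, 3 | 4, 4 => 0
  | 2, 3 | 3, 2 | 3, 4 | 4, 3 => 1
  | 2, 4 | 4, 2 => 2
  | _, (2 | 3 | 4) => dist_to_cycle n v (cycle_pos n u)
  | _, _ => dist_to_cycle n u (cycle_pos n v)
  end.

Ltac case_vertex u := move: u; case=> [|[|[|[|[|u]]]]].

Ltac G1_arith :=
  rewrite /G1_edge /G1_dist /dist_to_cycle /cycle_pos /cycle_dist /ab_dist /=; lia.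

Lemma G1_dist_refl n u : G1_dist n u u = 0.
Proof. by case_vertex u; G1_arith. Qed.

Lemma G1_dist_eq0 n u v : u < n + 5 -> v < n + 5 -> G1_dist n u v = 0 -> u = v.
Proof. by case_vertex u; case_vertex v; G1_arith. Qed.

Lemma G1_dist_lt n u v : u < n + 5 -> v < n + 5 -> G1_dist n u v < n + 5.
Proof. by case_vertex u; case_vertex v; G1_arith. Qed.

Lemma G1_dist_edge n u w v : 0 < n -> u < n + 5 -> w < n + 5 -> v < n + 5 ->
  G1_edge n u w || G1_edge n w u -> G1_dist n u v <= (G1_dist n w v).+1.
Proof. by case_vertex u; case_vertex w; case_vertex v; G1_arith. Qed.

Lemma exists2_of_has n (P : pred nat) s :
  has (fun w => (w < n + 5) && P w) s -> exists2 w, w < n + 5 & P w.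
Proof. by case/hasP=> w _ /andP[]; exists w. Qed.

Lemma G1_dist_step n u v : 0 < n -> u < n + 5 -> v < n + 5 -> 0 < G1_dist n u v ->
  exists2 w, w < n + 5 &
    (G1_edge n u w || G1_edge n w u) && ((G1_dist n w v).+1 == G1_dist n u v).
Proof.
(* Each list holds the neighbours of u; [has] over it unfolds to a finite
   disjunction that lia decides for every shape of v. *)
case: n => // n _; case_vertex u => ltu ltv pos_uv.
- apply: (@exists2_of_has _ _ [:: 1; 2; 3; 5]); move: ltv pos_uv; case_vertex v; G1_arith.
- apply: (@exists2_of_has _ _ [:: 0; 2; n.+1.+4]); move: ltv pos_uv; case_vertex v; G1_arith.
- apply: (@exists2_of_has _ _ [:: 0; 1; 3]); move: ltv pos_uv; case_vertex v; G1_arith.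
- apply: (@exists2_of_has _ _ [:: 0; 2; 4]); move: ltv pos_uv; case_vertex v; G1_arith.
- apply: (@exists2_of_has _ _ [:: 3]); move: ltv pos_uv; case_vertex v; G1_arith.
- move: ltu pos_uv; have [->|ne_un] := eqVneq u n.
  + case: n ltv => [|k] ltv ltu pos_uv.
    * apply: (@exists2_of_has _ _ [:: 0; 1]); move: ltv pos_uv; case_vertex v; G1_arith.
    * apply: (@exists2_of_has _ _ [:: k.+1.+4; 1]); move: ltv pos_uv; case_vertex v; G1_arith.
  + case: u ne_un => [|k] ne_un ltu pos_uv.
    * apply: (@exists2_of_has _ _ [:: 0; 6]); move: ltv pos_uv; case_vertex v; G1_arith.
    * apply: (@exists2_of_has _ _ [:: k.+1.+4; k.+3.+4]).
      by move: ltv pos_uv ne_un; case_vertex v; G1_arith.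
Qed.

Lemma dist_G1 n (u v : 'I_(n + 5)) : 0 < n -> dist (@G1 n) u v = G1_dist n u v.
Proof.
move=> n_gt0; apply: (@dist_eq_certificate _ _ (fun u v : 'I_(n + 5) => G1_dist n u v)).
- by move=> w; apply: G1_dist_refl.
- by move=> x y /G1_dist_eq0 eq_xy; apply/val_inj/eq_xy.
- by move=> x w y; apply: G1_dist_edge.
- move=> x y /(G1_dist_step n_gt0 (ltn_ord x) (ltn_ord y)) [w ltw /andP[exw /eqP eq_w]].
  by exists (Ordinal ltw).
- by move=> x y; rewrite card_ord; apply: G1_dist_lt.
Qed.

Lemma G1_dist_cycle_vertex n u p :
  G1_dist n u (cycle_vertex n p) = dist_to_cycle n u p.
Proof.
rewrite /cycle_vertex; case: eqP => [->|p_neq0]; first by case_vertex u.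
case: eqP => [->|_]; first by case_vertex u.
by case: p p_neq0 => // p _; case_vertex u.
Qed.

Lemma sum_G1_vertices n (F : nat -> nat) :
  \sum_(v < n + 5) F v = F 2 + F 3 + F 4 + \sum_(p < n.+2) F (cycle_vertex n p).
Proof.
rewrite -(big_mkord xpredT F) -(big_mkord xpredT (F \o cycle_vertex n)).
rewrite (_ : n + 5 = n.+1.+4); last by rewrite addnC.
rewrite [in RHS]big_nat_recr // [in RHS]big_nat_recl // !big_nat_recl //=.
rewrite /cycle_vertex /= eqxx.
have -> : \sum_(0 <= i < n) F (if i.+1 == n.+1 then 1 else i.+1.+4) =
          \sum_(0 <= i < n) F i.+1.+4.
  by apply: eq_big_nat => i /andP[_ lt_in]; rewrite eqSS ltn_eqF.
lia.
Qed.

Definition cycle_transmission (n : nat) : nat := \sum_(q < n.+2) cycle_dist n 0 q.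

Definition ab_transmission (n : nat) : nat := \sum_(q < n.+2) ab_dist n q.

Definition G1_transmission (n u : nat) : nat :=
  match u with
  | 2 => ab_transmission n + n + 5
  | 3 => cycle_transmission n + n + 4
  | 4 => cycle_transmission n + n.*2 + 7
  | _ => cycle_transmission n + ab_dist n (cycle_pos n u)
         + (cycle_dist n (cycle_pos n u) 0).*2 + 4
  end.

Lemma cycle_distC n p q : cycle_dist n p q = cycle_dist n q p.
Proof. by rewrite /cycle_dist addnC. Qed.

Lemma sum_cycle_dist n p : p <= n.+1 ->
  \sum_(q < n.+2) cycle_dist n p q = cycle_transmission n.
Proof.
elim: p => [//|p IHp] lt_pn.
rewrite -IHp 1?ltnW // big_ord_recl [in RHS]big_ord_recr /= addnC.
by congr (_ + _); rewrite /cycle_dist; lia.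
Qed.

Lemma sum_addn_const N (f : nat -> nat) c :
  \sum_(i < N) (f i + c) = \sum_(i < N) f i + N * c.
Proof. by rewrite big_split sum_nat_const card_ord. Qed.

Lemma transmission_G1 n (u : 'I_(n + 5)) : 0 < n ->
  transmission (@G1 n) u = G1_transmission n u.
Proof.
move=> n_gt0; rewrite /transmission; under eq_bigr do rewrite dist_G1 //.
rewrite sum_G1_vertices; under eq_bigr do rewrite G1_dist_cycle_vertex.
case: u => u /=; case_vertex u => lt_u /=; try by rewrite sum_cycle_dist; lia.
- under eq_bigr do rewrite -addn1.
  by rewrite sum_addn_const /ab_transmission; lia.
- under eq_bigr do rewrite cycle_distC -addn1.
  by rewrite sum_addn_const /cycle_transmission; lia.
- under eq_bigr do rewrite cycle_distC -addn2.
  by rewrite sum_addn_const /cycle_transmission; lia.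
Qed.

(* On a cycle of odd length 2k + 1 the distance from a exceeds the distance to
   the edge ab, by one, exactly at the k positions q > k. *)
Lemma cycle_transmission_odd n k : n.+1 = k.*2 ->
  cycle_transmission n = ab_transmission n + k.
Proof.
move=> n_eq; rewrite /cycle_transmission /ab_transmission.
rewrite (eq_bigr (fun q : 'I_n.+2 => ab_dist n q + (k < q))) => [|q _]; last first.
  by rewrite /cycle_dist /ab_dist; have := ltn_ord q; lia.
rewrite big_split /=; congr (_ + _).
rewrite -(big_mkord xpredT (fun q => nat_of_bool (k < q))).
rewrite (@big_cat_nat _ _ _ k.+1) //=; last lia.
rewrite (@eq_big_nat _ _ _ 0 k.+1 _ (fun _ => 0)) => [|i]; last lia.
rewrite (@eq_big_nat _ _ _ k.+1 n.+2 _ (fun _ => 1)) => [|i]; last lia.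
by rewrite !sum_nat_const_nat; lia.
Qed.

Lemma G1_transmission_inj m u v : 0 < m -> u < 6 * m + 1 + 5 -> v < 6 * m + 1 + 5 ->
  G1_transmission (6 * m + 1) u = G1_transmission (6 * m + 1) v -> u = v.
Proof.
move=> m_gt0; have := @cycle_transmission_odd (6 * m + 1) (3 * m + 1) ltac:(lia).
by case_vertex u; case_vertex v; rewrite /G1_transmission /cycle_pos /cycle_dist /ab_dist /=; lia.
Qed.

Theorem proposition1 : forall m : nat, 1 <= m ->
  transmission_irregular (@G1 (6 * m + 1)).
Proof.
move=> m m_gt0 u v; rewrite !transmission_G1 ?addn1 //.
by move/(G1_transmission_inj m_gt0 (ltn_ord u) (ltn_ord v))/val_inj.
Qed.
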